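(* Let $N,L\geq1$ be integers, $\sigma_p^2>0$, $N_0>0$ and $\mathcal{Y}\geq0$. For a normalized threshold $\lambda'\geq0$ let $$P_d(\lambda')=Q_{NL}\!\left(\sqrt{\frac{2L\sigma_p^2\mathcal{Y}}{N_0}},\sqrt{\lambda'}\right),\qquad P_f(\lambda')=\frac{\Gamma\!\left(NL,\frac{\lambda'}{2}\right)}{\Gamma(NL)},$$ and define $$\mathrm{AUC}(\mathcal{Y})\triangleq-\int_0^\infty P_d(\lambda')\frac{\partial P_f(\lambda')}{\partial\lambda'}\,d\lambda'.$$ Then $$\mathrm{AUC}(\mathcal{Y})=1-\exp\!\left(-\frac{L\sigma_p^2\mathcal{Y}}{N_0}\right)\sum_{l=0}^{NL-1}\frac{(NL)_l}{l!\,2^{NL+l}}\,{}_1F_1\!\left(NL+l,NL;\frac{L\sigma_p^2\mathcal{Y}}{2N_0}\right).$$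
   Context: $Q_\nu(a,b)$ is the generalized $\nu$th-order Marcum $Q$-function, $Q_\nu(a,b)=a^{1-\nu}\int_b^\infty x^{\nu}\exp\!\left(-\frac{x^2+a^2}{2}\right)I_{\nu-1}(ax)\,dx$ (for $a=0$ it equals $\Gamma(\nu,b^2/2)/\Gamma(\nu)$). $\Gamma(\cdot,\cdot)$ is the upper incomplete Gamma function, $(x)_l=x(x+1)\cdots(x+l-1)$ is the Pochhammer symbol, and ${}_1F_1$ is Kummer's confluent hypergeometric function. *)

From Stdlib Require Import Reals Arith Factorial.
From Coquelicot Require Import Coquelicot.
Open Scope R_scope.

Definition upper_gamma (s : nat) (x : R) : R :=
  RInt_gen (fun t => t ^ (s - 1) * exp (- t)) (at_point x) (Rbar_locally p_infty).

Definition Gamma_nat (s : nat) : R := upper_gamma s 0.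

(* Modified Bessel function of the first kind of integer order n:
   I_n(x) = sum_k (x/2)^(2k+n) / (k! Gamma(k+n+1)),  Gamma(k+n+1) = (k+n)!. *)
Definition besselI (n : nat) (x : R) : R :=
  Series (fun k => (x / 2) ^ (2 * k + n) / (INR (fact k) * INR (fact (k + n)))).

Definition marcumQ (nu : nat) (a b : R) : R :=
  if Req_EM_T a 0 then upper_gamma nu (b ^ 2 / 2) / Gamma_nat nu
  else / a ^ (nu - 1) *
       RInt_gen (fun x => x ^ nu * exp (- (x ^ 2 + a ^ 2) / 2) * besselI (nu - 1) (a * x))
                (at_point b) (Rbar_locally p_infty).

Fixpoint pochhammer (x : R) (l : nat) : R :=
  match l with
  | O => 1
  | S l' => pochhammer x l' * (x + INR l')
  end.

Definition hyp1F1 (a b z : R) : R :=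
  Series (fun k => pochhammer a k / pochhammer b k * z ^ k / INR (fact k)).

Definition Pd (N L : nat) (sigp2 N0 Y lam : R) : R :=
  marcumQ (N * L) (sqrt (2 * INR L * sigp2 * Y / N0)) (sqrt lam).

Definition Pf (N L : nat) (lam : R) : R :=
  upper_gamma (N * L) (lam / 2) / Gamma_nat (N * L).

(* With Q(K, x) = e^(-x) (1 + x + ... + x^(K-1)/(K-1)!) = Gamma(K, x)/Gamma(K), the
   false-alarm probability is P_f(l) = Q(NL, l/2), so -P_f' is the chi-square density with
   2NL degrees of freedom.  Expanding the Bessel function termwise shows that the Marcum
   function is a Poisson mixture of such tails (the noncentral chi-square law is a Poisson
   mixture of central ones):  P_d(l) = sum_m e^(-c) c^m/m! Q(NL + m, l/2),  c = L sigma_p^2 Y/N_0.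
   Each term integrates in closed form against the density through an explicit primitive,
   int_0^oo Q(j+1, l/2) f_(2NL)(l) dl = 1 - sum_(i<NL) binom(j+i, i)/2^(j+i+1),
   and summing these negative-binomial weights against the Poisson weights produces the
   1F1 series.  Integrating the Poisson series termwise over [0, +oo) is justified by the
   Weierstrass M-test on bounded intervals followed by Tannery's theorem as the upper
   bound tends to +oo. *)

From Stdlib Require Import Reals Arith Factorial Lra Lia.
From Coquelicot Require Import Coquelicot.
Open Scope R_scope.

Lemma fact_INR_S k : INR (fact (S k)) = INR (S k) * INR (fact k).
Proof. exact (mult_INR (S k) (fact k)). Qed.

Lemma exp_opp_mult_exp x : exp (- x) * exp x = 1.
Proof. rewrite <- exp_plus, Rplus_opp_l. apply exp_0. Qed.

Lemma exp_opp_le_1 y : 0 <= y -> exp (- y) <= 1.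
Proof.
  intros Hy. pose proof (exp_ineq1_le y). pose proof (exp_opp_mult_exp y).
  pose proof (exp_pos (- y)). nra.
Qed.

Lemma is_lim_seq_sum_f_R0 (a : nat -> R) (l : R) :
  is_series a l -> is_lim_seq (sum_f_R0 a) l.
Proof. intros Hl. apply (is_lim_seq_ext (sum_n a)); [apply sum_n_Reals | exact Hl]. Qed.

Lemma is_series_of_lim_seq_sum_f_R0 (a : nat -> R) (l : R) :
  is_lim_seq (sum_f_R0 a) l -> is_series a l.
Proof.
  intros Hl. exact (is_lim_seq_ext _ _ l (fun n => eq_sym (sum_n_Reals a n)) Hl).
Qed.

Lemma sum_f_R0_scal_l (c : R) (a : nat -> R) N :
  sum_f_R0 (fun i => c * a i) N = c * sum_f_R0 a N.
Proof. induction N as [|N IH]; simpl; [|rewrite IH]; ring. Qed.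

Lemma is_derive_sum_f_R0 (h : nat -> R -> R) (d : nat -> R) (x : R) N :
  (forall i, is_derive (h i) x (d i)) ->
  is_derive (fun t => sum_f_R0 (fun i => h i t) N) x (sum_f_R0 d N).
Proof.
  intros H. induction N as [|N IH]; [apply H|]. exact (is_derive_plus _ _ x _ _ IH (H (S N))).
Qed.

Lemma is_lim_sum_f_R0 (g : nat -> R -> R) (l : nat -> R) N :
  (forall m, is_lim (g m) p_infty (l m)) ->
  is_lim (fun B => sum_f_R0 (fun m => g m B) N) p_infty (sum_f_R0 l N).
Proof.
  intros H. induction N as [|N IH]; [apply H|]. exact (is_lim_plus' _ _ _ _ _ IH (H (S N))).
Qed.

Lemma is_series_sum_f_R0 (a : nat -> nat -> R) (l : nat -> R) K :
  (forall i, is_series (a i) (l i)) ->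
  is_series (fun m => sum_f_R0 (fun i => a i m) K) (sum_f_R0 l K).
Proof.
  intros H. induction K as [|K IH]; [apply H|]. exact (is_series_plus _ _ _ _ IH (H (S K))).
Qed.

Lemma sum_f_R0_ge0 (a : nat -> R) N : (forall n, 0 <= a n) -> 0 <= sum_f_R0 a N.
Proof. intros Ha. induction N as [|N IH]; simpl; [apply Ha | pose proof (Ha (S N)); lra]. Qed.

Lemma sum_f_R0_ge_term (a : nat -> R) i N :
  (forall n, 0 <= a n) -> (i <= N)%nat -> a i <= sum_f_R0 a N.
Proof.
  intros Ha HiN. induction HiN as [|N _ IH]; simpl.
  - destruct i as [|i]; simpl; [lra|]. pose proof (sum_f_R0_ge0 a i Ha). lra.
  - pose proof (Ha (S N)). lra.
Qed.

Lemma sum_f_R0_le_series (a : nat -> R) (l : R) :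
  (forall n, 0 <= a n) -> is_series a l -> forall N, sum_f_R0 a N <= l.
Proof.
  intros Ha Hl. apply is_lim_seq_incr_compare; [now apply is_lim_seq_sum_f_R0|].
  intros n. simpl. pose proof (Ha (S n)). lra.
Qed.

Lemma is_series_ge0 (a : nat -> R) (l : R) : (forall n, 0 <= a n) -> is_series a l -> 0 <= l.
Proof.
  intros Ha Hl. apply Rle_trans with (sum_f_R0 a 0); [apply Ha|].
  now apply sum_f_R0_le_series.
Qed.

Lemma is_lim_seq_series_tail (a : nat -> R) (l : R) :
  is_series a l -> is_lim_seq (fun N => l - sum_f_R0 a N) 0.
Proof.
  intros Hl. replace (Finite 0) with (Finite (l - l)) by (f_equal; ring).
  apply is_lim_seq_minus'; [apply is_lim_seq_const | now apply is_lim_seq_sum_f_R0].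
Qed.

Lemma series_tail_le (a b : nat -> R) (la lb : R) :
  (forall n, 0 <= a n <= b n) -> is_series a la -> is_series b lb ->
  forall N, 0 <= la - sum_f_R0 a N <= lb - sum_f_R0 b N.
Proof.
  intros Hab Ha Hb N. split.
  - assert (sum_f_R0 a N <= la) by (apply sum_f_R0_le_series; auto; apply Hab). lra.
  - assert (Hd : sum_f_R0 (fun n => b n - a n) N <= lb - la).
    { apply sum_f_R0_le_series; [intros n; pose proof (Hab n); lra|].
      exact (is_series_minus b a lb la Hb Ha). }
    rewrite minus_sum in Hd. lra.
Qed.

Lemma exp_series x : is_series (fun m => x ^ m / INR (fact m)) (exp x).
Proof.
  apply (is_series_ext _ _ _ (fun m => eq_sym (f_equal (fun y => y * _) (pow_n_pow x m)))).
  exact (is_exp_Reals x).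
Qed.

Lemma exp_term_ge0 x m : 0 <= x -> 0 <= x ^ m / INR (fact m).
Proof.
  intros Hx. apply Rmult_le_pos; [now apply pow_le|].
  apply Rlt_le, Rinv_0_lt_compat, INR_fact_lt_0.
Qed.

Lemma exp_term_le_exp x m : 0 <= x -> x ^ m / INR (fact m) <= exp x.
Proof.
  intros Hx. apply Rle_trans with (sum_f_R0 (fun j => x ^ j / INR (fact j)) m).
  - apply (sum_f_R0_ge_term (fun j => x ^ j / INR (fact j))); auto.
    intros; now apply exp_term_ge0.
  - apply sum_f_R0_le_series; [intros; now apply exp_term_ge0 | apply exp_series].
Qed.

Lemma pow_mult_exp_opp_le j x : 0 < x -> x ^ j * exp (- x) <= INR (fact (S j)) / x.
Proof.
  intros Hx. pose proof (exp_term_le_exp x (S j) (Rlt_le _ _ Hx)) as Hterm.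
  pose proof (INR_fact_lt_0 (S j)). pose proof (exp_pos x).
  rewrite exp_Ropp. simpl in Hterm.
  apply Rmult_le_reg_r with (exp x * x / INR (fact (S j))).
  { apply Rdiv_lt_0_compat; [apply Rmult_lt_0_compat|]; auto. }
  replace (x ^ j * / exp x * (exp x * x / INR (fact (S j))))
    with (x * x ^ j / INR (fact (S j))) by (field; lra).
  replace (INR (fact (S j)) / x * (exp x * x / INR (fact (S j)))) with (exp x) by (field; lra).
  exact Hterm.
Qed.

Lemma is_lim_pow_mult_exp_opp j : is_lim (fun x => x ^ j * exp (- x)) p_infty 0.
Proof.
  apply (is_lim_le_le_loc (fun _ => 0) (fun x => INR (fact (S j)) * / x)).
  - exists 0. intros x Hx. split.
    + apply Rmult_le_pos; [apply pow_le; lra | apply Rlt_le, exp_pos].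
    + now apply pow_mult_exp_opp_le.
  - apply is_lim_const.
  - replace (Finite 0) with (Rbar_mult (INR (fact (S j))) (Rbar_inv p_infty))
      by (simpl; f_equal; ring).
    apply is_lim_scal_l, is_lim_inv; [apply is_lim_id | discriminate].
Qed.

(** * The regularized upper incomplete gamma function *)

Fixpoint exp_partial (K : nat) (x : R) : R :=
  match K with O => 0 | S k => exp_partial k x + x ^ k / INR (fact k) end.

Definition reg_upper_gamma (K : nat) (x : R) : R := exp (- x) * exp_partial K x.

Lemma exp_partial_sum K x :
  exp_partial (S K) x = sum_f_R0 (fun j => x ^ j / INR (fact j)) K.
Proof.
  induction K as [|K IH]; [simpl; ring|].
  rewrite tech5, <- IH. reflexivity.
Qed.

Lemma exp_partial_0 K : exp_partial (S K) 0 = 1.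
Proof.
  rewrite exp_partial_sum. induction K as [|K IH]; [simpl; field|].
  rewrite tech5, IH, pow_i by lia. field. apply INR_fact_neq_0.
Qed.

Lemma is_derive_exp_partial K (x : R) : is_derive (exp_partial (S K)) x (exp_partial K x).
Proof.
  revert x. induction K as [|K IH]; intros x.
  - apply (is_derive_ext (fun _ => 1)); [intros t; simpl; field|].
    auto_derive; [exact I | reflexivity].
  - change (is_derive (fun t => exp_partial (S K) t + t ^ S K / INR (fact (S K))) x
              (exp_partial (S K) x)).
    auto_derive; [now exists (exp_partial K x) |].
    rewrite (Derive_ext _ (exp_partial (S K)) _ (fun _ => eq_refl)).
    rewrite (is_derive_unique _ _ _ (IH x)).
    change (fact K + K * fact K)%nat with (fact (S K)).
    change (match K with O => 1 | S _ => INR K + 1 end) with (INR (S K)).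
    rewrite fact_INR_S. pose proof (INR_fact_neq_0 K). pose proof (pos_INR K).
    rewrite S_INR. simpl. field. split; lra.
Qed.

Lemma is_derive_reg_upper_gamma k (x : R) :
  is_derive (reg_upper_gamma (S k)) x (- (exp (- x) * x ^ k / INR (fact k))).
Proof.
  assert (Hexp : is_derive (fun t => exp (- t)) x (- exp (- x)))
    by (auto_derive; [exact I | ring]).
  pose proof (is_derive_mult _ _ x _ _ Hexp (is_derive_exp_partial k x) Rmult_comm) as H.
  replace (- (exp (- x) * x ^ k / INR (fact k))) with
    (- exp (- x) * exp_partial (S k) x + exp (- x) * exp_partial k x)
    by (simpl; field; apply INR_fact_neq_0).
  exact H.
Qed.

Lemma reg_upper_gamma_0 K : reg_upper_gamma (S K) 0 = 1.
Proof. unfold reg_upper_gamma. rewrite exp_partial_0, Ropp_0, exp_0. ring. Qed.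

Lemma reg_upper_gamma_bounds K x : 0 <= x -> 0 <= reg_upper_gamma K x <= 1.
Proof.
  intros Hx. pose proof (exp_pos (- x)).
  assert (Hpartial : 0 <= exp_partial K x <= exp x).
  { destruct K as [|K]; [simpl; pose proof (exp_pos x); lra|]. rewrite exp_partial_sum.
    split; [apply sum_f_R0_ge0 | apply sum_f_R0_le_series; [|apply exp_series]];
      intros; now apply exp_term_ge0. }
  unfold reg_upper_gamma. rewrite <- (exp_opp_mult_exp x). split.
  - apply Rmult_le_pos; lra.
  - apply Rmult_le_compat_l; lra.
Qed.

Lemma is_lim_reg_upper_gamma K : is_lim (reg_upper_gamma K) p_infty 0.
Proof.
  induction K as [|K IH].
  - apply (is_lim_ext (fun _ => 0)); [intros x; unfold reg_upper_gamma; simpl; ring|].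
    apply is_lim_const.
  - apply (is_lim_ext (fun x => reg_upper_gamma K x + / INR (fact K) * (x ^ K * exp (- x)))).
    { intros x. unfold reg_upper_gamma. simpl. field. apply INR_fact_neq_0. }
    replace (Finite 0) with (Finite (0 + / INR (fact K) * 0)) by (f_equal; ring).
    apply is_lim_plus'; [exact IH|].
    apply (is_lim_scal_l _ _ _ 0), is_lim_pow_mult_exp_opp.
Qed.

Lemma is_lim_reg_upper_gamma_comp K (g : R -> R) :
  is_lim g p_infty p_infty -> is_lim (fun x => reg_upper_gamma K (g x)) p_infty 0.
Proof.
  intros Hg. apply (is_lim_comp _ _ _ _ _ (is_lim_reg_upper_gamma K) Hg).
  exists 0. intros; discriminate.
Qed.

Lemma is_lim_scal_pinfty (a : R) : 0 < a -> is_lim (fun x => a * x) p_infty p_infty.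
Proof.
  intros Ha. apply is_lim_spec. intros M. exists (M / a). intros x Hx.
  apply (Rmult_lt_compat_l a) in Hx; [|exact Ha].
  replace (a * (M / a)) with M in Hx by (field; lra). exact Hx.
Qed.

(** * Improper integrals on [b, +oo) *)

Local Notation is_RInt_pinfty f b l := (is_RInt_gen f (at_point b) (Rbar_locally p_infty) l).

Lemma is_RInt_pinfty_ex_RInt (f : R -> R) (b l B : R) :
  is_RInt_pinfty f b l -> b <= B -> ex_RInt f b B.
Proof.
  intros Hf HbB.
  destruct (Hf (fun _ => True) (filter_forall _ (fun _ => I))) as [P Q HP [M HM] HPQ].
  set (B' := Rmax (M + 1) B).
  destruct (HPQ b B' HP) as [y [Hy _]].
  { apply HM. pose proof (Rmax_l (M + 1) B). unfold B'. lra. }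
  apply (ex_RInt_Chasles_1 f b B B'); [split; [exact HbB | apply Rmax_r]|].
  now exists y.
Qed.

Lemma is_RInt_pinfty_lim (f : R -> R) (b l : R) :
  is_RInt_pinfty f b l -> is_lim (fun B => RInt f b B) p_infty l.
Proof.
  intros Hf. apply is_lim_spec. intros eps.
  destruct (Hf (ball l eps) (locally_ball l eps)) as [P Q HP [M HM] HPQ].
  exists M. intros B HB.
  destruct (HPQ b B HP (HM B HB)) as [y [Hy Hball]].
  simpl in Hy. now rewrite (is_RInt_unique _ _ _ _ Hy).
Qed.

Lemma is_RInt_pinfty_of_lim (f : R -> R) (b l : R) :
  (forall B, b <= B -> ex_RInt f b B) -> is_lim (fun B => RInt f b B) p_infty l ->
  is_RInt_pinfty f b l.
Proof.
  intros Hex Hl P HP.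
  destruct (Hl P HP) as [M HM].
  apply (Filter_prod _ _ _ (fun a => a = b) (fun B => Rmax M b < B));
    [reflexivity | now exists (Rmax M b)|].
  intros x B -> HB. pose proof (Rmax_l M b). pose proof (Rmax_r M b).
  exists (RInt f b B). split.
  - apply (RInt_correct f b B), Hex. lra.
  - apply HM. lra.
Qed.

Lemma is_RInt_pinfty_primitive (F f : R -> R) (b L : R) :
  (forall x, is_derive F x (f x)) -> (forall x, continuous f x) ->
  is_lim F p_infty L -> is_RInt_pinfty f b (L - F b).
Proof.
  intros HF Hf HL.
  apply (is_RInt_gen_ext (Derive F)).
  { apply filter_forall. intros ab x _. apply is_derive_unique, HF. }
  apply is_RInt_gen_Derive.
  - apply filter_forall. intros ab x _. now exists (f x).
  - apply filter_forall. intros ab x _.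
    apply (continuous_ext f); [intros t; symmetry; apply is_derive_unique, HF | apply Hf].
  - intros P HP. exact (locally_singleton _ P HP).
  - exact HL.
Qed.

Lemma RInt_bounds_pinfty (f : R -> R) (b v B : R) :
  (forall x, b <= x -> 0 <= f x) -> is_RInt_pinfty f b v -> b <= B ->
  0 <= RInt f b B <= v.
Proof.
  intros Hf0 Hf HbB.
  pose proof (fun B => is_RInt_pinfty_ex_RInt f b v B Hf) as Hex.
  assert (Hge0 : forall u w, b <= u <= w -> 0 <= RInt f u w).
  { intros u w Huw. apply RInt_ge_0; [lra | | intros; apply Hf0; lra].
    apply (ex_RInt_Chasles_2 f b); [lra | apply Hex; lra]. }
  split; [apply Hge0; lra|].
  assert (Hle : Rbar_le (RInt f b B) v); [|exact Hle].
  apply (is_lim_le_loc (fun _ => RInt f b B) (fun B' => RInt f b B') p_infty);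
    [| apply is_lim_const | now apply is_RInt_pinfty_lim].
  exists B. intros B' HB'.
  assert (Hsplit : RInt f b B + RInt f B B' = RInt f b B').
  { apply (RInt_Chasles f b B B'); [apply Hex; lra|].
    apply (ex_RInt_Chasles_2 f b); [lra | apply Hex; lra]. }
  pose proof (Hge0 B B'). lra.
Qed.

Lemma is_RInt_sum_f_R0 (g : nat -> R -> R) (I : nat -> R) (a b : R) N :
  (forall m, is_RInt (g m) a b (I m)) ->
  is_RInt (fun x => sum_f_R0 (fun m => g m x) N) a b (sum_f_R0 I N).
Proof.
  intros H. induction N as [|N IH]; [apply H|].
  exact (is_RInt_plus _ _ a b _ _ IH (H (S N))).
Qed.

Lemma is_RInt_series_dominated (f : nat -> R -> R) (F : R -> R) (q : nat -> R)
  (b B Sq : R) :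
  b <= B ->
  (forall m x, b <= x <= B -> 0 <= f m x <= q m) -> is_series q Sq ->
  (forall x, b <= x <= B -> is_series (fun m => f m x) (F x)) ->
  (forall m, ex_RInt (f m) b B) ->
  exists I, is_RInt F b B I /\ is_series (fun m => RInt (f m) b B) I.
Proof.
  intros HbB Hdom Hq HF Hex.
  (* [filterlim_RInt] needs uniform convergence on all of R: evaluate at the clamp of x. *)
  set (clamp := fun x => Rmax b (Rmin B x)).
  assert (Hclamp : forall x, b <= clamp x <= B).
  { intros x. split; [apply Rmax_l | apply Rmax_lub; [exact HbB | apply Rmin_l]]. }
  assert (Hclamp_id : forall x, Rmin b B < x < Rmax b B -> clamp x = x).
  { intros x Hx. rewrite Rmin_left, Rmax_right in Hx by exact HbB.
    unfold clamp. rewrite Rmin_right, Rmax_right; lra. }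
  set (S := fun N x => sum_f_R0 (fun m => f m (clamp x)) N).
  assert (HS : forall N, is_RInt (S N) b B (sum_f_R0 (fun m => RInt (f m) b B) N)).
  { intros N. apply is_RInt_sum_f_R0. intros m.
    apply (is_RInt_ext (f m)); [intros x Hx; now rewrite Hclamp_id|].
    exact (RInt_correct _ _ _ (Hex m)). }
  assert (Hunif : filterlim S eventually
                    (locally ((fun x => F (clamp x)) : fct_UniformSpace R R_CompleteNormedModule))).
  { intros P [eps HP].
    pose proof (is_lim_seq_series_tail q Sq Hq) as Htail.
    apply is_lim_seq_spec in Htail. destruct (Htail eps) as [N0 HN0].
    exists N0. intros N HN. apply HP. intros t.
    change (Rabs (S N t - F (clamp t)) < eps).
    pose proof (HN0 N HN) as Hsmall. rewrite Rminus_0_r in Hsmall.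
    pose proof (series_tail_le (fun m => f m (clamp t)) q _ _
                  (fun m => Hdom m _ (Hclamp t)) (HF _ (Hclamp t)) Hq N) as Hle.
    unfold S. rewrite Rabs_minus_sym, Rabs_right by lra.
    apply Rle_lt_trans with (Sq - sum_f_R0 q N); [lra|].
    exact (Rle_lt_trans _ _ _ (Rle_abs _) Hsmall). }
  destruct (filterlim_RInt S b B eventually eventually_filter _ _ HS Hunif) as [I [HI HFI]].
  exists I. split.
  - apply (is_RInt_ext (fun x => F (clamp x))); [intros x Hx; now rewrite Hclamp_id | exact HFI].
  - exact (is_series_of_lim_seq_sum_f_R0 _ _ HI).
Qed.

Lemma is_lim_series_dominated (e : R -> nat -> R) (S : R -> R) (v : nat -> R) (b V : R) :
  (forall B m, b <= B -> 0 <= e B m <= v m) ->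
  (forall m, is_lim (fun B => e B m) p_infty (v m)) ->
  (forall B, b <= B -> is_series (e B) (S B)) -> is_series v V ->
  is_lim S p_infty V.
Proof.
  intros Hdom Hlim HS HV. apply is_lim_spec. intros eps.
  assert (Heps2 : 0 < eps / 2) by (pose proof (cond_pos eps); lra).
  pose proof (is_lim_seq_series_tail v V HV) as Htail. apply is_lim_seq_spec in Htail.
  destruct (Htail (mkposreal _ Heps2)) as [N0 HN0].
  pose proof (HN0 N0 (Nat.le_refl _)) as Hsmall_tail. simpl in Hsmall_tail.
  assert (Hhead : is_lim (fun B => sum_f_R0 (fun m => v m - e B m) N0) p_infty 0).
  { replace (Finite 0) with (Finite (sum_f_R0 (fun _ => 0) N0))
      by (f_equal; rewrite sum_cte; ring).
    apply (is_lim_sum_f_R0 (fun m B => v m - e B m)). intros m.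
    replace (Finite 0) with (Finite (v m - v m)) by (f_equal; ring).
    apply is_lim_minus'; [apply is_lim_const | apply Hlim]. }
  apply is_lim_spec in Hhead. destruct (Hhead (mkposreal _ Heps2)) as [M HM].
  exists (Rmax M b). intros B HB. pose proof (Rmax_l M b). pose proof (Rmax_r M b).
  assert (HbB : b <= B) by lra.
  pose proof (HM B ltac:(lra)) as Hsmall_head. simpl in Hsmall_head.
  assert (Hgap_bounds : forall m, 0 <= v m - e B m <= v m)
    by (intros m; pose proof (Hdom B m HbB); lra).
  assert (Hgap : is_series (fun m => v m - e B m) (V - S B))
    by exact (is_series_minus _ _ _ _ HV (HS B HbB)).
  pose proof (series_tail_le (fun m => v m - e B m) v _ V Hgap_bounds Hgap HV N0).
  pose proof (is_series_ge0 _ _ (fun m => proj1 (Hgap_bounds m)) Hgap).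
  rewrite Rminus_0_r in Hsmall_tail, Hsmall_head.
  pose proof (Rle_abs (V - sum_f_R0 v N0)).
  pose proof (Rle_abs (sum_f_R0 (fun m => v m - e B m) N0)).
  rewrite Rabs_minus_sym, Rabs_right by lra. lra.
Qed.

Lemma is_RInt_pinfty_series (f : nat -> R -> R) (F : R -> R) (p v : nat -> R)
  (b Sp V : R) :
  (forall m x, b <= x -> 0 <= f m x) ->
  (forall B, exists W, forall m x, b <= x <= B -> f m x <= p m * W) -> is_series p Sp ->
  (forall x, b <= x -> is_series (fun m => f m x) (F x)) ->
  (forall m, is_RInt_pinfty (f m) b (v m)) -> is_series v V ->
  is_RInt_pinfty F b V.
Proof.
  intros Hf0 Hdom Hp HF Hv HV.
  assert (Hfin : forall B, b <= B ->
            is_RInt F b B (RInt F b B) /\ is_series (fun m => RInt (f m) b B) (RInt F b B)).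
  { intros B HbB. destruct (Hdom B) as [W HW].
    destruct (is_RInt_series_dominated f F (fun m => p m * W) b B (Sp * W)) as [I [HI HIs]].
    - exact HbB.
    - intros m x Hx. split; [apply Hf0; lra | now apply HW].
    - exact (is_series_scal_r W p Sp Hp).
    - intros x Hx. apply HF. lra.
    - intros m. exact (is_RInt_pinfty_ex_RInt _ _ _ _ (Hv m) HbB).
    - rewrite (is_RInt_unique _ _ _ _ HI). now split. }
  apply is_RInt_pinfty_of_lim; [intros B HbB; eexists; apply Hfin, HbB|].
  apply (is_lim_series_dominated (fun B m => RInt (f m) b B) _ v b); [| | |exact HV].
  - intros B m HbB. apply (RInt_bounds_pinfty (f m)); auto.
  - intros m. apply is_RInt_pinfty_lim, Hv.
  - intros B HbB. apply Hfin, HbB.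
Qed.

Lemma upper_gamma_S k x : upper_gamma (S k) x = INR (fact k) * reg_upper_gamma (S k) x.
Proof.
  apply is_RInt_gen_unique.
  replace (INR (fact k) * reg_upper_gamma (S k) x)
    with (0 - (- INR (fact k) * reg_upper_gamma (S k) x)) by ring.
  apply (is_RInt_pinfty_primitive (fun t => - INR (fact k) * reg_upper_gamma (S k) t)).
  - intros t. replace (S k - 1)%nat with k by lia.
    replace (t ^ k * exp (- t))
      with (- INR (fact k) * (- (exp (- t) * t ^ k / INR (fact k))))
      by (field; apply INR_fact_neq_0).
    exact (is_derive_scal _ t _ _ (is_derive_reg_upper_gamma k t)).
  - intros t. apply (@ex_derive_continuous R_AbsRing R_NormedModule). auto_derive. exact I.
  - replace (Finite 0) with (Rbar_mult (- INR (fact k)) 0) by (simpl; f_equal; ring).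
    apply is_lim_scal_l, is_lim_reg_upper_gamma.
Qed.

Lemma Gamma_nat_S k : Gamma_nat (S k) = INR (fact k).
Proof. unfold Gamma_nat. rewrite upper_gamma_S, reg_upper_gamma_0. ring. Qed.

(* The density of the chi-square distribution with [2 (k + 1)] degrees of freedom. *)
Definition chisq_density (k : nat) (lam : R) : R :=
  exp (- (lam / 2)) * (lam / 2) ^ k / (2 * INR (fact k)).

Lemma chisq_density_ge0 k lam : 0 <= lam -> 0 <= chisq_density k lam.
Proof.
  intros Hlam. unfold chisq_density. pose proof (exp_pos (- (lam / 2))).
  pose proof (INR_fact_lt_0 k). pose proof (pow_le (lam / 2) k ltac:(lra)).
  apply Rmult_le_pos; [apply Rmult_le_pos; lra|].
  apply Rlt_le, Rinv_0_lt_compat. lra.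
Qed.

Lemma chisq_density_le k B lam :
  0 <= lam <= B -> chisq_density k lam <= (B / 2) ^ k / (2 * INR (fact k)).
Proof.
  intros Hlam. unfold chisq_density, Rdiv at 2 4.
  apply Rmult_le_compat_r; [apply Rlt_le, Rinv_0_lt_compat; pose proof (INR_fact_lt_0 k); lra|].
  pose proof (pow_le (lam / 2) k ltac:(lra)).
  pose proof (pow_incr (lam / 2) (B / 2) k ltac:(lra)).
  pose proof (exp_opp_le_1 (lam / 2) ltac:(lra)).
  pose proof (exp_pos (- (lam / 2))). nra.
Qed.

Lemma is_derive_reg_upper_gamma_half k (lam : R) :
  is_derive (fun l => reg_upper_gamma (S k) (l / 2)) lam (- chisq_density k lam).
Proof.
  auto_derive; [eexists; apply is_derive_reg_upper_gamma|].
  rewrite (Derive_ext _ (reg_upper_gamma (S k)) _ (fun _ => eq_refl)).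
  rewrite (is_derive_unique _ _ _ (is_derive_reg_upper_gamma k _)).
  unfold chisq_density. change (lam * / 2) with (lam / 2). field. apply INR_fact_neq_0.
Qed.

(** * The Marcum Q-function as a Poisson mixture *)

Definition poisson_pmf (c : R) (m : nat) : R := exp (- c) * (c ^ m / INR (fact m)).

Lemma poisson_pmf_ge0 c m : 0 <= c -> 0 <= poisson_pmf c m.
Proof.
  intros Hc. apply Rmult_le_pos; [apply Rlt_le, exp_pos | now apply exp_term_ge0].
Qed.

Lemma is_series_poisson_pmf c : is_series (poisson_pmf c) 1.
Proof.
  rewrite <- (exp_opp_mult_exp c). exact (is_series_scal (exp (- c)) _ _ (exp_series c)).
Qed.

Lemma ex_series_poisson_mixture c (g : nat -> R) :
  0 <= c -> (forall m, 0 <= g m <= 1) -> ex_series (fun m => poisson_pmf c m * g m).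
Proof.
  intros Hc Hg. apply (@ex_series_le R_AbsRing R_CompleteNormedModule _ (poisson_pmf c)).
  - intros m. change (Rabs (poisson_pmf c m * g m) <= poisson_pmf c m).
    pose proof (poisson_pmf_ge0 c m Hc). pose proof (Hg m).
    rewrite Rabs_pos_eq by (apply Rmult_le_pos; lra). nra.
  - exists 1. apply is_series_poisson_pmf.
Qed.

(* The density of the chi distribution with [2 (j + 1)] degrees of freedom. *)
Definition chi_density (j : nat) (x : R) : R :=
  x ^ (2 * j + 1) * exp (- (x ^ 2 / 2)) / (2 ^ j * INR (fact j)).

Lemma chi_density_eq j x :
  chi_density j x = x * exp (- (x ^ 2 / 2)) * ((x ^ 2 / 2) ^ j / INR (fact j)).
Proof.
  unfold chi_density, Rdiv. rewrite Rpow_mult_distr, <- pow_mult, pow_inv, pow_add.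
  pose proof (INR_fact_neq_0 j). pose proof (pow_nonzero 2 j ltac:(lra)).
  field. auto.
Qed.

Lemma chi_density_bounds j x : 0 <= x -> 0 <= chi_density j x <= x.
Proof.
  intros Hx. rewrite chi_density_eq. set (y := x ^ 2 / 2).
  assert (Hy : 0 <= y) by (pose proof (pow2_ge_0 x); unfold y; lra).
  pose proof (exp_term_ge0 _ j Hy). pose proof (exp_term_le_exp _ j Hy).
  assert (Hxe : 0 <= x * exp (- y)) by (pose proof (exp_pos (- y)); apply Rmult_le_pos; lra).
  split; [now apply Rmult_le_pos|].
  apply Rle_trans with (x * exp (- y) * exp y); [now apply Rmult_le_compat_l|].
  rewrite Rmult_assoc, exp_opp_mult_exp. lra.
Qed.

Lemma is_RInt_pinfty_chi_density j b :
  is_RInt_pinfty (chi_density j) b (reg_upper_gamma (S j) (b ^ 2 / 2)).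
Proof.
  replace (reg_upper_gamma (S j) (b ^ 2 / 2)) with (0 - (- reg_upper_gamma (S j) (b ^ 2 / 2)))
    by ring.
  apply (is_RInt_pinfty_primitive (fun t => - reg_upper_gamma (S j) (t ^ 2 / 2))).
  - intros t. auto_derive; [eexists; apply is_derive_reg_upper_gamma|].
    rewrite (Derive_ext _ (reg_upper_gamma (S j)) _ (fun _ => eq_refl)).
    rewrite (is_derive_unique _ _ _ (is_derive_reg_upper_gamma j _)), chi_density_eq.
    change (t * (t * 1) * / 2) with (t ^ 2 / 2). field. apply INR_fact_neq_0.
  - intros t. apply (@ex_derive_continuous R_AbsRing R_NormedModule).
    unfold chi_density. auto_derive. exact I.
  - replace (Finite 0) with (Finite (- 0)) by (f_equal; ring).
    apply (is_lim_opp (fun t => reg_upper_gamma (S j) (t ^ 2 / 2)) p_infty 0).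
    apply is_lim_reg_upper_gamma_comp.
    apply (is_lim_le_p_loc (fun t => t)); [|apply is_lim_id].
    exists 2. intros t Ht. simpl. nra.
Qed.

Lemma is_series_poisson_pmf_0 (g : nat -> R) : is_series (fun m => poisson_pmf 0 m * g m) (g O).
Proof.
  apply is_series_of_lim_seq_sum_f_R0, (is_lim_seq_ext (fun _ => g O)); [|apply is_lim_seq_const].
  intros N. induction N as [|N IH].
  - unfold poisson_pmf. simpl. rewrite Ropp_0, exp_0. field.
  - rewrite tech5, <- IH. unfold poisson_pmf. simpl pow. unfold Rdiv. ring.
Qed.

Definition besselI_term (k : nat) (y : R) (i : nat) : R :=
  (y / 2) ^ (2 * i + k) / (INR (fact i) * INR (fact (i + k))).

Lemma is_series_besselI k y : 0 <= y -> is_series (besselI_term k y) (besselI k y).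
Proof.
  intros Hy. set (z := y / 2). assert (Hz : 0 <= z) by (unfold z; lra).
  assert (Hex : ex_series (besselI_term k y)).
  { apply (@ex_series_le R_AbsRing R_CompleteNormedModule _
             (fun i => z ^ k * ((z ^ 2) ^ i / INR (fact i)))).
    - intros i. change (Rabs (besselI_term k y i) <= z ^ k * ((z ^ 2) ^ i / INR (fact i))).
      pose proof (pow_le z k Hz). pose proof (exp_term_ge0 (z ^ 2) i (pow2_ge_0 z)).
      pose proof (INR_fact_lt_0 (i + k)).
      assert (Hfact : 1 <= INR (fact (i + k))).
      { apply (le_INR 1). pose proof (lt_O_fact (i + k)). lia. }
      assert (Hterm : besselI_term k y i
                      = z ^ k * ((z ^ 2) ^ i / INR (fact i)) * / INR (fact (i + k))).
      { unfold besselI_term. fold z. rewrite pow_add, pow_mult.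
        field. split; apply INR_fact_neq_0. }
      assert (Hbound : 0 <= z ^ k * ((z ^ 2) ^ i / INR (fact i))) by (apply Rmult_le_pos; lra).
      assert (Hinv : 0 < / INR (fact (i + k)) <= 1).
      { split; [now apply Rinv_0_lt_compat | rewrite <- Rinv_1; apply Rinv_le_contravar; lra]. }
      rewrite Hterm, Rabs_pos_eq by (apply Rmult_le_pos; lra).
      rewrite <- (Rmult_1_r (z ^ k * _)) at 2. apply Rmult_le_compat_l; lra.
    - exists (z ^ k * exp (z ^ 2)). exact (is_series_scal _ _ _ (exp_series (z ^ 2))). }
  exact (Series_correct _ Hex).
Qed.

Lemma besselI_term_eq k c a x i : a ^ 2 = 2 * c ->
  x ^ S k * exp (- (x ^ 2 + a ^ 2) / 2) * besselI_term k (a * x) i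
  = a ^ k * (poisson_pmf c i * chi_density (k + i) x).
Proof.
  intros Ha2. unfold besselI_term, poisson_pmf, chi_density.
  replace (- (x ^ 2 + a ^ 2) / 2) with (- (x ^ 2 / 2) + - c) by (rewrite Ha2; field).
  rewrite exp_plus.
  replace (2 * (k + i) + 1)%nat with (S k + (2 * i + k))%nat by lia.
  replace (fact (i + k)) with (fact (k + i)) by (f_equal; lia).
  replace ((a * x / 2) ^ (2 * i + k))
    with (a ^ (2 * i) * a ^ k * x ^ (2 * i + k) / (2 ^ (2 * i) * 2 ^ k)).
  2:{ unfold Rdiv. rewrite !Rpow_mult_distr, pow_inv, !pow_add.
      field. split; apply pow_nonzero; lra. }
  rewrite !pow_add, !pow_mult, Ha2, Rpow_mult_distr.
  replace ((2 ^ 2) ^ i) with (2 ^ i * 2 ^ i) by (rewrite <- Rpow_mult_distr; f_equal; ring).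
  pose proof (INR_fact_neq_0 i). pose proof (INR_fact_neq_0 (k + i)).
  pose proof (pow_nonzero 2 i ltac:(lra)). pose proof (pow_nonzero 2 k ltac:(lra)).
  field. auto.
Qed.

Lemma marcumQ_0 k b : marcumQ (S k) 0 b = reg_upper_gamma (S k) (b ^ 2 / 2).
Proof.
  unfold marcumQ. destruct (Req_EM_T 0 0) as [_|H0]; [|now contradiction H0].
  rewrite upper_gamma_S, Gamma_nat_S. field. apply INR_fact_neq_0.
Qed.

Lemma is_RInt_pinfty_marcumQ_integrand k c a b S0 :
  0 <= c -> a ^ 2 = 2 * c -> 0 < a -> 0 <= b ->
  is_series (fun m => poisson_pmf c m * reg_upper_gamma (S (k + m)) (b ^ 2 / 2)) S0 ->
  is_RInt_pinfty (fun x => x ^ S k * exp (- (x ^ 2 + a ^ 2) / 2) * besselI k (a * x))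
    b (a ^ k * S0).
Proof.
  intros Hc Ha2 Ha Hb HS0. pose proof (pow_lt a k Ha) as Hak.
  apply (is_RInt_pinfty_series (fun m x => a ^ k * (poisson_pmf c m * chi_density (k + m) x)) _
           (fun m => a ^ k * poisson_pmf c m)
           (fun m => a ^ k * (poisson_pmf c m * reg_upper_gamma (S (k + m)) (b ^ 2 / 2)))
           b (a ^ k * 1)).
  - intros m x Hx. pose proof (poisson_pmf_ge0 c m Hc).
    pose proof (chi_density_bounds (k + m) x ltac:(lra)). apply Rmult_le_pos; nra.
  - intros B. exists B. intros m x Hx. pose proof (poisson_pmf_ge0 c m Hc).
    pose proof (chi_density_bounds (k + m) x ltac:(lra)).
    rewrite Rmult_assoc. apply Rmult_le_compat_l; [lra|]. apply Rmult_le_compat_l; lra.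
  - exact (is_series_scal _ _ _ (is_series_poisson_pmf c)).
  - intros x Hx. apply (is_series_ext _ _ _ (fun i => besselI_term_eq k c a x i Ha2)).
    refine (is_series_scal _ _ _ (is_series_besselI k (a * x) _)).
    apply Rmult_le_pos; lra.
  - intros m. refine (is_RInt_gen_scal _ _ _ (is_RInt_gen_scal _ _ _ _)).
    apply is_RInt_pinfty_chi_density.
  - exact (is_series_scal _ _ _ HS0).
Qed.

Lemma marcumQ_poisson_mixture k c b : 0 <= c -> 0 <= b ->
  is_series (fun m => poisson_pmf c m * reg_upper_gamma (S (k + m)) (b ^ 2 / 2))
    (marcumQ (S k) (sqrt (2 * c)) b).
Proof.
  intros Hc Hb. destruct (Req_dec c 0) as [-> | Hc0].
  - rewrite Rmult_0_r, sqrt_0, marcumQ_0.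
    pose proof (is_series_poisson_pmf_0 (fun m => reg_upper_gamma (S (k + m)) (b ^ 2 / 2))) as H0.
    cbv beta in H0. now rewrite Nat.add_0_r in H0.
  - set (a := sqrt (2 * c)).
    assert (Ha : 0 < a) by (apply sqrt_lt_R0; lra).
    assert (Ha2 : a ^ 2 = 2 * c) by (unfold a; rewrite <- Rsqr_pow2, Rsqr_sqrt; lra).
    assert (Hmix : ex_series (fun m => poisson_pmf c m * reg_upper_gamma (S (k + m)) (b ^ 2 / 2))).
    { apply ex_series_poisson_mixture; [exact Hc|]. intros m.
      apply reg_upper_gamma_bounds. pose proof (pow2_ge_0 b). lra. }
    destruct Hmix as [S0 HS0]. change R in S0.
    unfold marcumQ. destruct (Req_EM_T a 0) as [Ha0|_]; [lra|].
    replace (S k - 1)%nat with k by lia.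
    rewrite (is_RInt_gen_unique _ _ (is_RInt_pinfty_marcumQ_integrand k c a b S0 Hc Ha2 Ha Hb HS0)).
    replace (/ a ^ k * (a ^ k * S0)) with S0 by (field; apply pow_nonzero; lra).
    exact HS0.
Qed.

(** * A gamma tail integrated against a chi-square density *)

Definition negbin_weight (j i : nat) : R :=
  INR (fact (j + i)) / (INR (fact j) * INR (fact i) * 2 ^ S (j + i)).

Lemma negbin_weight_ge0 j i : 0 <= negbin_weight j i.
Proof.
  unfold negbin_weight. pose proof (INR_fact_lt_0 (j + i)). pose proof (INR_fact_lt_0 j).
  pose proof (INR_fact_lt_0 i). pose proof (pow_lt 2 (S (j + i)) ltac:(lra)).
  apply Rlt_le, Rdiv_lt_0_compat; [lra|]. apply Rmult_lt_0_compat; [apply Rmult_lt_0_compat|]; lra.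
Qed.

Definition tail_primitive (j k : nat) (x : R) : R :=
  sum_f_R0 (fun i => negbin_weight j i * reg_upper_gamma (S (j + i)) (2 * x)) k
  - reg_upper_gamma (S j) x * reg_upper_gamma (S k) x.

(* The derivative factorizes since [2 negbin_weight j i (2x)^(j+i) / (j+i)! = (x^j/j!) (x^i/i!)]. *)
Lemma is_derive_negbin_term j i (x : R) :
  is_derive (fun t => negbin_weight j i * reg_upper_gamma (S (j + i)) (2 * t)) x
    (- (exp (- x) * x ^ j / INR (fact j)) * (exp (- x) * (x ^ i / INR (fact i)))).
Proof.
  auto_derive; [eexists; apply is_derive_reg_upper_gamma|].
  rewrite (Derive_ext _ (reg_upper_gamma (S (j + i))) _ (fun _ => eq_refl)).
  rewrite (is_derive_unique _ _ _ (is_derive_reg_upper_gamma (j + i) _)).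
  replace (- (2 * x)) with (- x + - x) by ring.
  unfold negbin_weight. change (2 ^ S (j + i)) with (2 * 2 ^ (j + i)).
  rewrite exp_plus, Rpow_mult_distr, !pow_add.
  pose proof (INR_fact_neq_0 i). pose proof (INR_fact_neq_0 j). pose proof (INR_fact_neq_0 (j + i)).
  pose proof (pow_nonzero 2 i ltac:(lra)). pose proof (pow_nonzero 2 j ltac:(lra)).
  field. auto.
Qed.

Lemma is_derive_tail_primitive j k (x : R) :
  is_derive (tail_primitive j k) x
    (reg_upper_gamma (S j) x * (exp (- x) * x ^ k / INR (fact k))).
Proof.
  pose proof (is_derive_sum_f_R0 _ _ x k (fun i => is_derive_negbin_term j i x)) as Hsum.
  rewrite !sum_f_R0_scal_l, <- exp_partial_sum in Hsum. fold (reg_upper_gamma (S k) x) in Hsum.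
  pose proof (is_derive_mult _ _ x _ _ (is_derive_reg_upper_gamma j x)
                (is_derive_reg_upper_gamma k x) Rmult_comm) as Hprod.
  replace (reg_upper_gamma (S j) x * (exp (- x) * x ^ k / INR (fact k))) with
    (minus (- (exp (- x) * x ^ j / INR (fact j)) * reg_upper_gamma (S k) x)
       (plus (mult (- (exp (- x) * x ^ j / INR (fact j))) (reg_upper_gamma (S k) x))
          (mult (reg_upper_gamma (S j) x) (- (exp (- x) * x ^ k / INR (fact k))))))
    by (unfold minus, plus, opp, mult; simpl; field; split; apply INR_fact_neq_0).
  exact (is_derive_minus _ _ x _ _ Hsum Hprod).
Qed.

Lemma tail_primitive_0 j k : tail_primitive j k 0 = sum_f_R0 (negbin_weight j) k - 1.
Proof.
  unfold tail_primitive. rewrite Rmult_0_r, !reg_upper_gamma_0.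
  rewrite (sum_eq _ (negbin_weight j)); [ring|]. intros i _. rewrite reg_upper_gamma_0. ring.
Qed.

Lemma is_lim_tail_primitive j k : is_lim (tail_primitive j k) p_infty 0.
Proof.
  replace (Finite 0) with (Finite (sum_f_R0 (fun _ => 0) k - 0 * 0))
    by (f_equal; rewrite sum_cte; ring).
  apply is_lim_minus'.
  - apply (is_lim_sum_f_R0 (fun i x => negbin_weight j i * reg_upper_gamma (S (j + i)) (2 * x))).
    intros i. replace (Finite 0) with (Rbar_mult (negbin_weight j i) 0) by (simpl; f_equal; ring).
    apply is_lim_scal_l, is_lim_reg_upper_gamma_comp, is_lim_scal_pinfty. lra.
  - apply (is_lim_mult _ _ _ 0 0); [apply is_lim_reg_upper_gamma .. | exact I].
Qed.

Lemma is_RInt_pinfty_reg_upper_gamma_chisq j k :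
  is_RInt_pinfty (fun lam => reg_upper_gamma (S j) (lam / 2) * chisq_density k lam)
    0 (1 - sum_f_R0 (negbin_weight j) k).
Proof.
  replace (1 - sum_f_R0 (negbin_weight j) k) with (0 - tail_primitive j k (0 / 2))
    by (unfold Rdiv; rewrite Rmult_0_l, tail_primitive_0; ring).
  apply (is_RInt_pinfty_primitive (fun lam => tail_primitive j k (lam / 2))).
  - intros lam. auto_derive; [eexists; apply is_derive_tail_primitive|].
    rewrite (Derive_ext _ (tail_primitive j k) _ (fun _ => eq_refl)).
    rewrite (is_derive_unique _ _ _ (is_derive_tail_primitive j k _)).
    unfold chisq_density. change (lam * / 2) with (lam / 2). field. apply INR_fact_neq_0.
  - intros lam. apply (@ex_derive_continuous R_AbsRing R_NormedModule).
    unfold chisq_density. auto_derive. eexists; apply is_derive_reg_upper_gamma.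
  - apply (is_lim_comp _ _ _ _ _ (is_lim_tail_primitive j k)); [|exists 0; intros; discriminate].
    apply (is_lim_ext (fun lam => / 2 * lam)); [intros; unfold Rdiv; ring|].
    apply is_lim_scal_pinfty. lra.
Qed.

Lemma negbin_weight_le_1 j i : negbin_weight j i <= 1.
Proof.
  (* The total mass left over is the integral of a nonnegative function. *)
  assert (Hmass : 0 <= 1 - sum_f_R0 (negbin_weight j) i).
  { refine (Rle_trans _ _ _ _ (proj2 (RInt_bounds_pinfty _ 0 _ 0 _
              (is_RInt_pinfty_reg_upper_gamma_chisq j i) (Rle_refl 0)))).
    - rewrite RInt_point. apply Rle_refl.
    - intros lam Hlam. apply Rmult_le_pos; [apply reg_upper_gamma_bounds; lra|].
      now apply chisq_density_ge0. }
  pose proof (sum_f_R0_ge_term (negbin_weight j) i i (negbin_weight_ge0 j) (Nat.le_refl i)). lra.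
Qed.

(** * Summation against the Poisson weights *)

Lemma pochhammer_INR_S a l : pochhammer (INR (S a)) l = INR (fact (a + l)) / INR (fact a).
Proof.
  induction l as [|l IH].
  - simpl. rewrite Nat.add_0_r. field. apply INR_fact_neq_0.
  - change (pochhammer (INR (S a)) l * (INR (S a) + INR l) = INR (fact (a + S l)) / INR (fact a)).
    rewrite IH, Nat.add_succ_r, fact_INR_S, !S_INR, plus_INR. field. apply INR_fact_neq_0.
Qed.

Lemma poisson_negbin_eq k i c m :
  poisson_pmf c m * negbin_weight (k + m) i
  = exp (- c) * (pochhammer (INR (S k)) i / (INR (fact i) * 2 ^ (S k + i)))
    * (pochhammer (INR (S k + i)) m / pochhammer (INR (S k)) m * (c / 2) ^ m / INR (fact m)).
Proof.
  change (INR (S k + i)) with (INR (S (k + i))).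
  unfold poisson_pmf, negbin_weight. rewrite !pochhammer_INR_S.
  replace (fact (k + m + i)) with (fact (k + i + m)) by (f_equal; lia).
  replace (S (k + m + i)) with (S k + i + m)%nat by lia.
  rewrite pow_add. unfold Rdiv. rewrite Rpow_mult_distr, pow_inv.
  pose proof (INR_fact_neq_0 i). pose proof (INR_fact_neq_0 k). pose proof (INR_fact_neq_0 m).
  pose proof (INR_fact_neq_0 (k + m)). pose proof (INR_fact_neq_0 (k + i)).
  pose proof (pow_nonzero 2 m ltac:(lra)). pose proof (pow_nonzero 2 (S k + i) ltac:(lra)).
  field. repeat split; auto.
Qed.

Lemma is_series_poisson_negbin k i c : 0 <= c ->
  is_series (fun m => poisson_pmf c m * negbin_weight (k + m) i)
    (exp (- c) * (pochhammer (INR (S k)) i / (INR (fact i) * 2 ^ (S k + i))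
                  * hyp1F1 (INR (S k + i)) (INR (S k)) (c / 2))).
Proof.
  intros Hc. set (A := pochhammer (INR (S k)) i / (INR (fact i) * 2 ^ (S k + i))).
  assert (HA : 0 < A).
  { unfold A. rewrite pochhammer_INR_S.
    pose proof (INR_fact_lt_0 (k + i)). pose proof (INR_fact_lt_0 k). pose proof (INR_fact_lt_0 i).
    pose proof (pow_lt 2 (S k + i) ltac:(lra)).
    apply Rdiv_lt_0_compat; [apply Rdiv_lt_0_compat|apply Rmult_lt_0_compat]; lra. }
  pose proof (exp_pos (- c)).
  assert (Hex : ex_series (fun m => poisson_pmf c m * negbin_weight (k + m) i)).
  { apply ex_series_poisson_mixture; [exact Hc|]. intros m.
    split; [apply negbin_weight_ge0 | apply negbin_weight_le_1]. }
  destruct Hex as [Sx HSx]. change R in Sx.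
  assert (Hhyp : hyp1F1 (INR (S k + i)) (INR (S k)) (c / 2) = / (exp (- c) * A) * Sx).
  { apply is_series_unique.
    apply (is_series_ext
             (fun m => / (exp (- c) * A) * (poisson_pmf c m * negbin_weight (k + m) i))).
    - intros m. rewrite poisson_negbin_eq. fold A.
      rewrite <- Rmult_assoc, Rinv_l, Rmult_1_l; [reflexivity | nra].
    - exact (is_series_scal _ _ _ HSx). }
  rewrite Hhyp. replace (exp (- c) * (A * (/ (exp (- c) * A) * Sx))) with Sx by (field; lra).
  exact HSx.
Qed.

Lemma is_series_poisson_negbin_tail k c : 0 <= c ->
  is_series (fun m => poisson_pmf c m * (1 - sum_f_R0 (negbin_weight (k + m)) k))
    (1 - exp (- c) * sum_f_R0 (fun i =>
           pochhammer (INR (S k)) i / (INR (fact i) * 2 ^ (S k + i))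
           * hyp1F1 (INR (S k + i)) (INR (S k)) (c / 2)) k).
Proof.
  intros Hc. rewrite <- sum_f_R0_scal_l.
  apply (is_series_ext (fun m => poisson_pmf c m
                          - sum_f_R0 (fun i => poisson_pmf c m * negbin_weight (k + m) i) k)).
  { intros m. rewrite sum_f_R0_scal_l. simpl. ring. }
  apply (is_series_minus _ _ _ _ (is_series_poisson_pmf c)).
  apply (is_series_sum_f_R0 (fun i m => poisson_pmf c m * negbin_weight (k + m) i)).
  intros i. now apply is_series_poisson_negbin.
Qed.

Lemma is_RInt_pinfty_marcumQ_chisq k c : 0 <= c ->
  is_RInt_pinfty (fun lam => marcumQ (S k) (sqrt (2 * c)) (sqrt lam) * chisq_density k lam) 0
    (1 - exp (- c) * sum_f_R0 (fun i =>
           pochhammer (INR (S k)) i / (INR (fact i) * 2 ^ (S k + i))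
           * hyp1F1 (INR (S k + i)) (INR (S k)) (c / 2)) k).
Proof.
  intros Hc.
  apply (is_RInt_pinfty_series
           (fun m lam => poisson_pmf c m
                         * (reg_upper_gamma (S (k + m)) (lam / 2) * chisq_density k lam))
           _ (poisson_pmf c) (fun m => poisson_pmf c m * (1 - sum_f_R0 (negbin_weight (k + m)) k))
           0 1).
  - intros m lam Hlam. apply Rmult_le_pos; [now apply poisson_pmf_ge0|].
    apply Rmult_le_pos; [apply reg_upper_gamma_bounds; lra | now apply chisq_density_ge0].
  - intros B. exists ((B / 2) ^ k / (2 * INR (fact k))). intros m lam Hlam.
    apply Rmult_le_compat_l; [now apply poisson_pmf_ge0|].
    pose proof (reg_upper_gamma_bounds (S (k + m)) (lam / 2) ltac:(lra)).
    pose proof (chisq_density_ge0 k lam ltac:(lra)). pose proof (chisq_density_le k B lam Hlam).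
    nra.
  - apply is_series_poisson_pmf.
  - intros lam Hlam.
    apply (is_series_ext (fun m => poisson_pmf c m * reg_upper_gamma (S (k + m)) (lam / 2)
                                   * chisq_density k lam)); [intros m; simpl; ring|].
    refine (is_series_scal_r _ _ _ _).
    replace (lam / 2) with (sqrt lam ^ 2 / 2) by (rewrite <- Rsqr_pow2, Rsqr_sqrt; lra).
    apply marcumQ_poisson_mixture; [exact Hc | apply sqrt_pos].
  - intros m. refine (is_RInt_gen_scal _ _ _ _).
    apply is_RInt_pinfty_reg_upper_gamma_chisq.
  - now apply is_series_poisson_negbin_tail.
Qed.

Lemma Derive_Pf N L lam : (0 < N * L)%nat ->
  Derive (Pf N L) lam = - chisq_density (N * L - 1) lam.
Proof.
  intros HNL. unfold Pf. destruct (N * L)%nat as [|k]; [lia|].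
  replace (S k - 1)%nat with k by lia.
  rewrite (Derive_ext _ (fun l => reg_upper_gamma (S k) (l / 2))).
  - apply is_derive_unique, is_derive_reg_upper_gamma_half.
  - intros l. rewrite upper_gamma_S, Gamma_nat_S. field. apply INR_fact_neq_0.
Qed.

Theorem corollary3 (N L : nat) (sigp2 N0 Y : R) :
  (1 <= N)%nat -> (1 <= L)%nat -> 0 < sigp2 -> 0 < N0 -> 0 <= Y ->
  is_RInt_gen (fun lam => - (Pd N L sigp2 N0 Y lam * Derive (Pf N L) lam))
    (at_point 0) (Rbar_locally p_infty)
    (1 - exp (- (INR L * sigp2 * Y / N0)) *
       sum_f_R0 (fun l =>
         pochhammer (INR (N * L)) l / (INR (fact l) * 2 ^ (N * L + l)) *
         hyp1F1 (INR (N * L + l)) (INR (N * L)) (INR L * sigp2 * Y / (2 * N0)))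
       (N * L - 1)).
Proof.
  intros HN HL Hsigp2 HN0 HY.
  set (c := INR L * sigp2 * Y / N0).
  assert (Hc : 0 <= c).
  { apply Rmult_le_pos; [|now apply Rlt_le, Rinv_0_lt_compat].
    apply Rmult_le_pos; [apply Rmult_le_pos; [apply pos_INR | lra] | exact HY]. }
  replace (INR L * sigp2 * Y / (2 * N0)) with (c / 2) by (unfold c; field; lra).
  apply (is_RInt_gen_ext
           (fun lam => marcumQ (N * L) (sqrt (2 * c)) (sqrt lam) * chisq_density (N * L - 1) lam)).
  { apply filter_forall. intros _ lam _. rewrite Derive_Pf by nia. unfold Pd.
    replace (2 * INR L * sigp2 * Y / N0) with (2 * c) by (unfold c; field; lra).
    simpl. ring. }
  destruct (N * L)%nat as [|k] eqn:HNL; [nia|]. replace (S k - 1)%nat with k by lia.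
  now apply is_RInt_pinfty_marcumQ_chisq.
Qed.
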